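(* Let $(X,|\cdot|_X)$ be a Banach space, $T>0$, and let $A\colon D(A)\subset X\to X$ be the infinitesimal generator of a $C_0$-semigroup $\{S(t): t\ge0\}$ on $X$. Let $C_A\ge0$ be a constant with $|S(t)|_{\mathcal L(X)}\le C_A$ for all $t\in[0,2T]$. Let $a,b,k>0$ and let $F,G\colon X^2\to X$ be continuous. Assume: (i) there are nonnegative constants $a_{11},a_{12},a_{21},a_{22}$ such that for all $x,\bar x,y,\bar y\in X$, $|F(x,y)-F(\bar x,\bar y)|_X\le a_{11}|x-\bar x|_X+a_{12}|y-\bar y|_X$ and $|G(x,y)-G(\bar x,\bar y)|_X\le a_{21}|x-\bar x|_X+a_{22}|y-\bar y|_X$; (ii) there exists $\theta\ge0$ such that the matrix \[ M(\theta):=C_A\begin{bmatrix}\frac1a+\left(1+\frac1a\right)Ta_{11}+\frac kaTa_{21} & \left(\left(1+\frac1a\right)a_{12}+\frac kaa_{22}\right)\frac{e^{\theta T}-1}{\theta}\\[3pt] Ta_{21} & a_{22}\frac{1-e^{-\theta T}}{\theta}\end{bmatrix} \] is convergent to zero. Then for every $\beta\in X$ there exists a unique pair $(x,y)\in C([0,T];X)^2$ with $y(0)=\beta$ such that for all $t\in[0,T]$ \[ x(t)=S(t)x(0)+\int_0^tS(t-s)F(x(s),y(s))\,ds,\qquad y(t)=S(t)y(0)+\int_0^tS(t-s)G(x(s),y(s))\,ds, \] and $x(T)-a\,x(0)=k\big(y(T)-b\,y(0)\big)$.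
   Context: $\mathcal L(X)$ is the space of bounded linear operators on $X$ with the operator norm. For $\theta=0$ the quotients $\frac{e^{\theta T}-1}{\theta}$ and $\frac{1-e^{-\theta T}}{\theta}$ are understood as their limit value $T$. A square matrix with nonnegative entries is convergent to zero if its powers tend to the zero matrix (equivalently, its spectral radius is $<1$). *)

From Stdlib Require Import Reals.
From Coquelicot Require Import Coquelicot.
Open Scope R_scope.

Record M2 := mkM2 { m11 : R; m12 : R; m21 : R; m22 : R }.

Definition M2mul (A B : M2) : M2 :=
  mkM2 (m11 A * m11 B + m12 A * m21 B) (m11 A * m12 B + m12 A * m22 B)
       (m21 A * m11 B + m22 A * m21 B) (m21 A * m12 B + m22 A * m22 B).

Definition M2id : M2 := mkM2 1 0 0 1.

Fixpoint M2pow (A : M2) (n : nat) : M2 :=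
  match n with O => M2id | S n => M2mul A (M2pow A n) end.

Definition convergent_to_zero (A : M2) : Prop :=
  is_lim_seq (fun n => m11 (M2pow A n)) 0 /\ is_lim_seq (fun n => m12 (M2pow A n)) 0 /\
  is_lim_seq (fun n => m21 (M2pow A n)) 0 /\ is_lim_seq (fun n => m22 (M2pow A n)) 0.

(* (e^{θT}-1)/θ and (1-e^{-θT})/θ, with value T at θ = 0 *)
Definition qplus (theta T : R) : R :=
  if Req_EM_T theta 0 then T else (exp (theta * T) - 1) / theta.
Definition qminus (theta T : R) : R :=
  if Req_EM_T theta 0 then T else (1 - exp (- (theta * T))) / theta.

Definition Mtheta (CA a k T a11 a12 a21 a22 theta : R) : M2 :=
  mkM2 (CA * (1 / a + (1 + 1 / a) * T * a11 + k / a * T * a21))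
       (CA * (((1 + 1 / a) * a12 + k / a * a22) * qplus theta T))
       (CA * (T * a21))
       (CA * (a22 * qminus theta T)).

Section Semigroup.
Context {X : CompleteNormedModule R_AbsRing}.

Definition bounded_linear_op (L : X -> X) : Prop :=
  (forall u v, L (plus u v) = plus (L u) (L v)) /\
  (forall (r : R) u, L (scal r u) = scal r (L u)) /\
  (exists M : R, forall u, norm (L u) <= M * norm u).

Definition C0_semigroup (S : R -> X -> X) : Prop :=
  (forall t, 0 <= t -> bounded_linear_op (S t)) /\
  (forall u, S 0 u = u) /\
  (forall t s u, 0 <= t -> 0 <= s -> S (t + s) u = S t (S s u)) /\
  (forall u, filterlim (fun t => S t u) (at_right 0) (locally u)).

Definition is_generator (S : R -> X -> X) (D : X -> Prop) (A : X -> X) : Prop :=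
  (forall u, D u <-> exists v,
      filterlim (fun h => scal (/ h) (minus (S h u) u)) (at_right 0) (locally v)) /\
  (forall u, D u ->
      filterlim (fun h => scal (/ h) (minus (S h u) u)) (at_right 0) (locally (A u))).

Definition continuous_on_0T (T : R) (f : R -> X) : Prop :=
  forall t, 0 <= t <= T ->
    filterlim f (within (fun s => 0 <= s <= T) (locally t)) (locally (f t)).

Definition mild_eq (S : R -> X -> X) (H : X -> X -> X) (x y z : R -> X) (t : R) : Prop :=
  exists I : X, is_RInt (fun s => S (t - s) (H (x s) (y s))) 0 t I /\
                z t = plus (S t (z 0)) I.

Definition is_solution (S : R -> X -> X) (F G : X -> X -> X) (T a b k : R) (beta : X)
  (x y : R -> X) : Prop :=
  continuous_on_0T T x /\ continuous_on_0T T y /\ y 0 = beta /\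
  (forall t, 0 <= t <= T -> mild_eq S F x y x t /\ mild_eq S G x y y t) /\
  minus (x T) (scal a (x 0)) = scal k (minus (y T) (scal b (y 0))).

End Semigroup.

From Stdlib Require Import Reals Lra Lia.
From Coquelicot Require Import Coquelicot.
Open Scope R_scope.

(* Solving the boundary condition for x(0) turns the problem into a fixed point
   of an operator N on C([0,T];X)^2 built from mild formulas.  If two inputs
   differ by at most p in the first component and by r e^{theta t} in the
   second, their images differ by the entries of M(theta) (p, r) in the same
   sense.  As M(theta) >= 0 converges to zero, some w > 0 satisfies
   M(theta) w <= q w with q < 1, so N is a q-contraction for the sup-norm with
   weights w1 and w2 e^{theta t} (Perov's argument); Picard iteration gives
   existence and the contraction gives uniqueness. *)

Lemma mult_lt_of_le_div c x eps : 0 <= c -> 0 < eps -> 0 <= x -> x <= eps / (c + 1) ->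
  c * x < eps.
Proof.
  intros Hc He Hx H.
  apply Rle_lt_trans with (c * (eps / (c + 1))); [apply Rmult_le_compat_l; assumption|].
  apply Rmult_lt_reg_r with (c + 1); [lra|].
  replace (c * (eps / (c + 1)) * (c + 1)) with (c * eps) by (field; lra). nra.
Qed.

Lemma pow_lt_eps c q eps : 0 <= c -> 0 <= q < 1 -> 0 < eps -> exists n, c * q ^ n < eps.
Proof.
  intros Hc Hq He.
  destruct (pow_lt_1_zero q) with (y := eps / (c + 1)) as [N HN].
  { rewrite Rabs_pos_eq; lra. }
  { apply Rdiv_lt_0_compat; lra. }
  exists N. specialize (HN N (le_n N)). rewrite Rabs_pos_eq in HN by (apply pow_le; lra).
  assert (0 <= q ^ N) by (apply pow_le; lra).
  apply Rle_lt_trans with ((c + 1) * q ^ N); [nra|].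
  apply Rmult_lt_reg_r with (/ (c + 1)); [apply Rinv_0_lt_compat; lra|].
  replace ((c + 1) * q ^ N * / (c + 1)) with (q ^ N) by (field; lra). exact HN.
Qed.

Lemma exp_le_mono x y : x <= y -> exp x <= exp y.
Proof. intros [H|<-]; [left; apply exp_increasing; exact H | right; reflexivity]. Qed.

Lemma exp_ge_1 x : 0 <= x -> 1 <= exp x.
Proof. intros Hx. rewrite <- exp_0. apply exp_le_mono. exact Hx. Qed.

Section GroupIdentities.
Context {G : AbelianGroup}.

Lemma minus_plus_plus (u v u' v' : G) :
  minus (plus u v) (plus u' v') = plus (minus u u') (minus v v').
Proof.
  unfold minus. rewrite opp_plus, <- !plus_assoc. f_equal.
  rewrite (plus_comm v), <- plus_assoc. f_equal. apply plus_comm.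
Qed.

Lemma minus_plus_l (w u u' : G) : minus (plus w u) (plus w u') = minus u u'.
Proof. rewrite minus_plus_plus, minus_eq_zero. apply plus_zero_l. Qed.

Lemma minus_minus_minus (u v u' v' : G) :
  minus (minus u v) (minus u' v') = minus (minus u u') (minus v v').
Proof.
  unfold minus at 2 3. rewrite minus_plus_plus. unfold minus.
  rewrite (opp_plus v), opp_opp. reflexivity.
Qed.

Lemma minus_plus_swap (u v w : G) : minus (plus u v) w = plus (minus u w) v.
Proof. unfold minus. rewrite <- !plus_assoc. f_equal. apply plus_comm. Qed.

Lemma minus_minus_cancel (u v : G) : minus u (minus u v) = v.
Proof.
  unfold minus at 1. rewrite opp_minus. unfold minus.
  rewrite plus_comm, <- plus_assoc, plus_opp_l. apply plus_zero_r.
Qed.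

End GroupIdentities.

Lemma minus_scal_eq_iff {V : ModuleSpace R_Ring} (a : R) (u x w : V) : a <> 0 ->
  minus u (scal a x) = w <-> x = scal (/ a) (minus u w).
Proof.
  intros Ha.
  assert (Hinv : mult (/ a) a = @one R_Ring /\ mult a (/ a) = @one R_Ring).
  { unfold mult, one; simpl. split; field; exact Ha. }
  split; intros H; subst.
  - rewrite minus_minus_cancel, scal_assoc, (proj1 Hinv). symmetry. apply scal_one.
  - rewrite scal_assoc, (proj2 Hinv), scal_one. apply minus_minus_cancel.
Qed.

Lemma minus_scal_combination {V : ModuleSpace R_Ring} (c k : R) (u1 u2 v1 v2 u1' u2' v2' e : V) :
  minus (scal c (minus (plus u1 u2) (scal k (minus (plus v1 v2) e))))
        (scal c (minus (plus u1' u2') (scal k (minus (plus v1 v2') e))))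
  = scal c (minus (plus (minus u1 u1') (minus u2 u2')) (scal k (minus v2 v2'))).
Proof.
  rewrite <- scal_minus_distr_l. f_equal.
  rewrite (minus_minus_minus (plus u1 u2)), (minus_plus_plus u1), <- scal_minus_distr_l.
  rewrite (minus_minus_minus (plus v1 v2)), (minus_eq_zero e).
  rewrite (minus_zero_r (minus (plus v1 v2) (plus v1 v2'))).
  rewrite (minus_plus_l v1). reflexivity.
Qed.

(* Coquelicot's lemmas on [NormedModule] do not rewrite in goals over a
   [CompleteNormedModule], whose operations go through other canonical
   projections; hence these restatements. *)
Section NormFacts.
Context {V : CompleteNormedModule R_AbsRing}.

Lemma norm_minus_sym (u v : V) : norm (minus u v) = norm (minus v u).
Proof. rewrite <- norm_opp, opp_minus. reflexivity. Qed.

Lemma norm_minus_self (u : V) : norm (minus u u) = 0.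
Proof. rewrite minus_eq_zero. exact (@norm_zero R_AbsRing V). Qed.

Lemma norm_plus_le (u v : V) : norm (plus u v) <= norm u + norm v.
Proof. exact (@norm_triangle R_AbsRing V u v). Qed.

Lemma norm_scal_le (r : R) (u : V) : norm (scal r u) <= Rabs r * norm u.
Proof. exact (@norm_scal R_AbsRing V r u). Qed.

Lemma norm_minus_le (u v : V) : norm (minus u v) <= norm u + norm v.
Proof.
  eapply Rle_trans; [apply (@norm_triangle R_AbsRing V u (opp v))|].
  apply Rplus_le_compat_l, Req_le, (@norm_opp R_AbsRing V v).
Qed.

Lemma norm_minus_triangle (u v w : V) :
  norm (minus u w) <= norm (minus u v) + norm (minus v w).
Proof. rewrite (minus_trans v). apply norm_plus_le. Qed.

Lemma eq_of_norm_minus_le (u v : V) :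
  (forall eps, 0 < eps -> norm (minus u v) <= eps) -> u = v.
Proof.
  intros H.
  assert (H0 : norm (minus u v) = 0).
  { apply Rle_antisym; [|apply norm_ge_0].
    apply Rle_plus_epsilon. intros e He. rewrite Rplus_0_l. auto. }
  apply norm_eq_zero in H0. apply plus_reg_r with (opp v). rewrite plus_opp_r. exact H0.
Qed.

End NormFacts.

Section IntervalContinuity.
Context {V : CompleteNormedModule R_AbsRing}.

Definition cont_in (a b : R) (f : R -> V) (t : R) : Prop :=
  forall eps, 0 < eps -> exists d, 0 < d /\
    forall s, a <= s <= b -> Rabs (s - t) < d -> norm (minus (f s) (f t)) < eps.

Definition cont_on (a b : R) (f : R -> V) : Prop := forall t, a <= t <= b -> cont_in a b f t.

Definition clamp (a b s : R) : R := Rmax a (Rmin b s).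

Lemma clamp_in a b s : a <= b -> a <= clamp a b s <= b.
Proof. intros. unfold clamp, Rmax, Rmin. repeat destruct Rle_dec; lra. Qed.

Lemma clamp_id a b s : a <= s <= b -> clamp a b s = s.
Proof. intros. unfold clamp, Rmax, Rmin. repeat destruct Rle_dec; lra. Qed.

Lemma clamp_lipschitz a b s t : a <= b -> Rabs (clamp a b s - clamp a b t) <= Rabs (s - t).
Proof.
  intros. unfold clamp, Rmax, Rmin. repeat destruct Rle_dec;
  unfold Rabs; repeat destruct Rcase_abs; lra.
Qed.

(* Extending [f] by constants outside [a, b] reduces continuity on [a, b] to
   continuity on R, where Coquelicot's compactness results apply. *)
Lemma cont_on_continuous_clamp a b f : a <= b -> cont_on a b f ->
  forall z, continuous (fun s => f (clamp a b s)) z.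
Proof.
  intros Hab H z. apply filterlim_locally. intros eps.
  destruct (H (clamp a b z) (clamp_in a b z Hab) eps (cond_pos eps)) as [d [Hd Hs]].
  exists (mkposreal d Hd). intros s Hs'. apply (@norm_compat1 R_AbsRing V).
  apply Hs; [apply clamp_in; exact Hab|].
  eapply Rle_lt_trans; [apply clamp_lipschitz; exact Hab | exact Hs'].
Qed.

Lemma cont_on_subinterval a b a' b' f : a <= a' -> b' <= b -> cont_on a b f -> cont_on a' b' f.
Proof.
  intros H1 H2 H t Ht eps Heps. destruct (H t ltac:(lra) eps Heps) as [d [Hd Hs]].
  exists d. split; [exact Hd|]. intros s Hs1. apply Hs. lra.
Qed.

Lemma cont_on_bounded a b f : a <= b -> cont_on a b f ->
  exists B, 0 <= B /\ forall t, a <= t <= b -> norm (f t) <= B.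
Proof.
  intros Hab H.
  destruct (continuity_ab_maj (fun s => norm (f (clamp a b s))) a b Hab) as [M [HM _]].
  { intros c Hc. apply continuity_pt_filterlim.
    apply (filterlim_comp _ _ _ (fun s => f (clamp a b s)) norm _ (locally (f (clamp a b c)))).
    - apply cont_on_continuous_clamp; assumption.
    - exact (@filterlim_norm R_AbsRing V _). }
  exists (Rmax 0 (norm (f (clamp a b M)))). split; [apply Rmax_l|].
  intros t Ht. eapply Rle_trans; [|apply Rmax_r].
  rewrite <- (clamp_id a b t Ht). apply HM. exact Ht.
Qed.

Lemma cont_on_uniform a b f : a <= b -> cont_on a b f ->
  forall eps, 0 < eps -> exists d, 0 < d /\ forall s t, a <= s <= b -> a <= t <= b ->
    Rabs (s - t) < d -> norm (minus (f s) (f t)) < eps.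
Proof.
  intros Hab H eps Heps.
  destruct (unifcont_normed_1d (fun s => f (clamp a b s)) a b) with (eps := mkposreal _ Heps)
    as [d Hd].
  { intros x _. apply cont_on_continuous_clamp; assumption. }
  exists d. split; [apply cond_pos|]. intros s t Hs Ht Hst.
  assert (B := Hd t s Ht Hs Hst). unfold ball_norm in B. simpl in B.
  rewrite !clamp_id in B; assumption.
Qed.

Lemma cont_on_const a b (c : V) : cont_on a b (fun _ => c).
Proof.
  intros t Ht eps Heps. exists 1. split; [lra|].
  intros. rewrite norm_minus_self. exact Heps.
Qed.

Lemma cont_on_plus a b f g : cont_on a b f -> cont_on a b g ->
  cont_on a b (fun t => plus (f t) (g t)).
Proof.
  intros Hf Hg t Ht eps Heps.
  destruct (Hf t Ht (eps / 2) ltac:(lra)) as [d1 [Hd1 A1]].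
  destruct (Hg t Ht (eps / 2) ltac:(lra)) as [d2 [Hd2 A2]].
  exists (Rmin d1 d2). split; [apply Rmin_pos; assumption|].
  intros s Hs Hsd. rewrite (minus_plus_plus (f s)). eapply Rle_lt_trans; [apply norm_plus_le|].
  assert (B1 := A1 s Hs (Rlt_le_trans _ _ _ Hsd (Rmin_l _ _))).
  assert (B2 := A2 s Hs (Rlt_le_trans _ _ _ Hsd (Rmin_r _ _))).
  lra.
Qed.

Lemma cont_on_uniform_limit a b (fn : nat -> R -> V) f (e : nat -> R) :
  (forall n, cont_on a b (fn n)) ->
  (forall n s, a <= s <= b -> norm (minus (fn n s) (f s)) <= e n) ->
  (forall eps, 0 < eps -> exists n, e n < eps) ->
  cont_on a b f.
Proof.
  intros Hc Hb He t Ht eps Heps.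
  destruct (He (eps / 3)) as [n Hn]; [lra|].
  destruct (Hc n t Ht (eps / 3)) as [d [Hd Hs]]; [lra|].
  exists d. split; [exact Hd|]. intros s Hs1 Hs2.
  eapply Rle_lt_trans; [apply (norm_minus_triangle _ (fn n s))|].
  eapply Rle_lt_trans; [apply Rplus_le_compat_l, (norm_minus_triangle _ (fn n t))|].
  assert (A1 := Hb n s Hs1). rewrite norm_minus_sym in A1.
  assert (A2 := Hs s Hs1 Hs2). assert (A3 := Hb n t Ht). lra.
Qed.

Definition lipschitz2 (H : V -> V -> V) (c1 c2 : R) : Prop :=
  forall u ub v vb,
    norm (minus (H u v) (H ub vb)) <= c1 * norm (minus u ub) + c2 * norm (minus v vb).

Definition lift2 (H : V -> V -> V) (x y : R -> V) (s : R) : V := H (x s) (y s).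

Lemma cont_on_lift2 (H : V -> V -> V) c1 c2 a b x y :
  0 <= c1 -> 0 <= c2 -> lipschitz2 H c1 c2 ->
  cont_on a b x -> cont_on a b y -> cont_on a b (lift2 H x y).
Proof.
  intros H1 H2 HH Hx Hy t Ht eps Heps.
  assert (E1 : 0 < eps / 2 / (c1 + 1)) by (apply Rdiv_lt_0_compat; lra).
  assert (E2 : 0 < eps / 2 / (c2 + 1)) by (apply Rdiv_lt_0_compat; lra).
  destruct (Hx t Ht _ E1) as [d1 [Hd1 A1]].
  destruct (Hy t Ht _ E2) as [d2 [Hd2 A2]].
  exists (Rmin d1 d2). split; [apply Rmin_pos; assumption|].
  intros s Hs Hsd.
  assert (B1 := A1 s Hs (Rlt_le_trans _ _ _ Hsd (Rmin_l _ _))).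
  assert (B2 := A2 s Hs (Rlt_le_trans _ _ _ Hsd (Rmin_r _ _))).
  eapply Rle_lt_trans; [apply HH|].
  assert (c1 * norm (minus (x s) (x t)) < eps / 2)
    by (apply mult_lt_of_le_div; [lra | lra | apply norm_ge_0 | left; exact B1]).
  assert (c2 * norm (minus (y s) (y t)) < eps / 2)
    by (apply mult_lt_of_le_div; [lra | lra | apply norm_ge_0 | left; exact B2]).
  lra.
Qed.

Lemma continuous_on_0T_iff T (f : R -> V) : continuous_on_0T T f <-> cont_on 0 T f.
Proof.
  split; intros H t Ht.
  - intros eps Heps.
    assert (Hnf := @norm_factor_gt_0 _ V).
    assert (He : 0 < eps / (@norm_factor _ V))
      by (apply Rdiv_lt_0_compat; [exact Heps | exact Hnf]).
    destruct (proj1 (filterlim_locally _ _) (H t Ht) (mkposreal _ He)) as [d Hd].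
    exists d. split; [apply cond_pos|]. intros s Hs1 Hs2.
    assert (B := @norm_compat2 R_AbsRing V _ _ _ (Hd s Hs2 Hs1)). simpl in B.
    replace (norm_factor * (eps / norm_factor)) with eps in B by (field; lra). exact B.
  - apply filterlim_locally. intros eps.
    destruct (H t Ht eps (cond_pos eps)) as [d [Hd Hs]].
    exists (mkposreal d Hd). intros s Hs' Hs''.
    apply (@norm_compat1 R_AbsRing V). apply Hs; assumption.
Qed.

Lemma ex_RInt_cont_on a b (f : R -> V) :
  a <= b -> cont_on a b f -> ex_RInt f a b.
Proof.
  intros Hab H.
  apply ex_RInt_ext with (f := fun s => f (clamp a b s)).
  { intros x Hx. rewrite Rmin_left in Hx by lra. rewrite Rmax_right in Hx by lra.
    rewrite clamp_id; [reflexivity | lra]. }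
  apply ex_RInt_continuous. intros z _. exact (cont_on_continuous_clamp a b f Hab H z).
Qed.

End IntervalContinuity.

Section LinearMaps.
Context {U V : NormedModule R_AbsRing} (L : U -> V) (HL : is_linear L).

Lemma Riemann_sum_linear (f : R -> U) ptd :
  L (Riemann_sum f ptd) = Riemann_sum (fun s => L (f s)) ptd.
Proof.
  unfold Riemann_sum. generalize (SF_t ptd).
  match goal with |- context [seq.pairmap _ ?p _] => generalize p end.
  intros x0 l. revert x0. induction l as [|y l IH]; intros x0; simpl.
  - exact (linear_zero L HL).
  - rewrite (linear_plus L HL), IH, (linear_scal L HL). reflexivity.
Qed.

Lemma is_RInt_linear (f : R -> U) a b I :
  is_RInt f a b I -> is_RInt (fun s => L (f s)) a b (L I).
Proof.
  intros HI. unfold is_RInt in *.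
  eapply filterlim_ext; [|eapply filterlim_comp; [exact HI | apply (linear_cont L I HL)]].
  intros ptd. simpl. rewrite (linear_scal L HL). f_equal. apply Riemann_sum_linear.
Qed.

End LinearMaps.

Section GeometricSequences.
Context {V : CompleteNormedModule R_AbsRing} (u : nat -> V) (c q : R)
  (Hq : 0 <= q < 1) (Hc : 0 <= c)
  (Hstep : forall n, norm (minus (u (S n)) (u n)) <= c * q ^ n).

Definition limseq (v : nat -> V) : V := lim (filtermap v eventually).

Lemma geometric_tail N m : norm (minus (u (N + m)%nat) (u N)) <= c * q ^ N / (1 - q).
Proof.
  assert (Htel : norm (minus (u (N + m)%nat) (u N)) <= c * q ^ N * (1 - q ^ m) / (1 - q)).
  { induction m as [|m IH].
    - rewrite Nat.add_0_r, (norm_minus_self (u N)). simpl. apply Req_le. field. lra.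
    - eapply Rle_trans; [apply (norm_minus_triangle _ (u (N + m)%nat))|].
      replace (N + S m)%nat with (S (N + m)) by lia.
      eapply Rle_trans; [apply Rplus_le_compat; [apply Hstep | apply IH]|].
      rewrite pow_add. apply Req_le. simpl. field. lra. }
  eapply Rle_trans; [exact Htel|].
  assert (0 <= q ^ N) by (apply pow_le; lra). assert (0 <= q ^ m) by (apply pow_le; lra).
  unfold Rdiv. apply Rmult_le_compat_r; [apply Rlt_le, Rinv_0_lt_compat; lra|].
  assert (0 <= c * q ^ N) by (apply Rmult_le_pos; lra). nra.
Qed.

Lemma geometric_cauchy : cauchy (filtermap u eventually).
Proof.
  intros eps.
  destruct (pow_lt_eps c q (eps * (1 - q))) as [N HN]; try assumption.
  { apply Rmult_lt_0_compat; [apply cond_pos | lra]. }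
  exists (u N), N. intros n Hn. apply (@norm_compat1 R_AbsRing V).
  replace n with (N + (n - N))%nat by lia.
  eapply Rle_lt_trans; [apply geometric_tail|].
  apply Rmult_lt_reg_r with (1 - q); [lra|].
  unfold Rdiv. rewrite Rmult_assoc, Rinv_l, Rmult_1_r by lra. exact HN.
Qed.

Lemma geometric_limseq N : norm (minus (u N) (limseq u)) <= c * q ^ N / (1 - q).
Proof.
  assert (Hp : ProperFilter (filtermap u eventually))
    by (apply filtermap_proper_filter, eventually_filter).
  apply Rle_plus_epsilon. intros eps Heps.
  assert (Hnf := @norm_factor_gt_0 _ V).
  assert (He : 0 < eps / (@norm_factor _ V)) by (apply Rdiv_lt_0_compat; [exact Heps | exact Hnf]).
  destruct (complete_cauchy _ Hp geometric_cauchy (mkposreal _ He)) as [N0 HN0].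
  specialize (HN0 (N + N0)%nat ltac:(lia)).
  apply (@norm_compat2 R_AbsRing V) in HN0. simpl in HN0.
  replace (norm_factor * (eps / norm_factor)) with eps in HN0 by (field; lra).
  eapply Rle_trans; [apply (norm_minus_triangle _ (u (N + N0)%nat))|].
  rewrite (norm_minus_sym (u N)). apply Rplus_le_compat; [apply geometric_tail | left; exact HN0].
Qed.

End GeometricSequences.

Lemma is_RInt_exp_qplus theta t :
  is_RInt (fun s => exp (theta * (t - s))) 0 t (qplus theta t).
Proof.
  unfold qplus. destruct (Req_EM_T theta 0) as [E|E].
  - subst theta. apply is_RInt_ext with (f := fun _ => 1).
    { intros x _. rewrite Rmult_0_l, exp_0. reflexivity. }
    replace t with (scal (t - 0) 1) at 2 by (unfold scal; simpl; unfold mult; simpl; ring).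
    apply (@is_RInt_const R_NormedModule).
  - replace ((exp (theta * t) - 1) / theta) with
      ((fun s => - exp (theta * (t - s)) / theta) t - (fun s => - exp (theta * (t - s)) / theta) 0).
    2: { simpl. rewrite Rminus_diag, Rmult_0_r, exp_0, Rminus_0_r. field. exact E. }
    apply (is_RInt_derive (fun s => - exp (theta * (t - s)) / theta)).
    + intros x _. auto_derive; [exact I|]. replace (t + - x) with (t - x) by ring. field. exact E.
    + intros x _. apply (@ex_derive_continuous R_AbsRing R_NormedModule). auto_derive. exact I.
Qed.

Section ExpQuotients.
Context (theta t T : R) (Hth : 0 <= theta) (Ht : 0 <= t <= T).

Lemma qplus_nonneg : 0 <= qplus theta t.
Proof.
  unfold qplus. destruct Req_EM_T; [lra|].
  apply Rdiv_le_0_compat; [|lra]. assert (1 <= exp (theta * t)) by (apply exp_ge_1; nra). lra.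
Qed.

Lemma qminus_nonneg : 0 <= qminus theta T.
Proof.
  unfold qminus. destruct Req_EM_T; [lra|]. apply Rdiv_le_0_compat; [|lra].
  assert (exp (- (theta * T)) <= exp 0) by (apply exp_le_mono; nra). rewrite exp_0 in H. lra.
Qed.

Lemma qplus_le_mono : qplus theta t <= qplus theta T.
Proof.
  unfold qplus. destruct Req_EM_T; [lra|].
  unfold Rdiv. apply Rmult_le_compat_r; [apply Rlt_le, Rinv_0_lt_compat; lra|].
  assert (exp (theta * t) <= exp (theta * T)) by (apply exp_le_mono; nra). lra.
Qed.

Lemma qplus_le_exp_qminus : qplus theta t <= exp (theta * t) * qminus theta T.
Proof.
  unfold qplus, qminus. destruct Req_EM_T as [->|].
  - rewrite Rmult_0_l, exp_0. lra.
  - unfold Rdiv. rewrite <- Rmult_assoc.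
    apply Rmult_le_compat_r; [apply Rlt_le, Rinv_0_lt_compat; lra|].
    rewrite Rmult_minus_distr_l, Rmult_1_r, <- exp_plus.
    assert (exp (theta * t + - (theta * T)) <= exp 0) by (apply exp_le_mono; nra).
    rewrite exp_0 in H. lra.
Qed.

End ExpQuotients.

Definition M2nonneg (M : M2) : Prop :=
  0 <= m11 M /\ 0 <= m12 M /\ 0 <= m21 M /\ 0 <= m22 M.

Section ConvergentMatrix.
Variable M : M2.
Hypothesis HM : M2nonneg M.

Lemma M2pow_subinvariant v1 v2 : 0 <= v1 -> 0 <= v2 ->
  v1 <= m11 M * v1 + m12 M * v2 -> v2 <= m21 M * v1 + m22 M * v2 ->
  forall n, v1 <= m11 (M2pow M n) * v1 + m12 (M2pow M n) * v2 /\
            v2 <= m21 (M2pow M n) * v1 + m22 (M2pow M n) * v2.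
Proof.
  destruct HM as [N1 [N2 [N3 N4]]]. intros P1 P2 Q1 Q2 n.
  induction n as [|n [I1 I2]]; simpl; [lra|].
  set (P := M2pow M n) in *.
  assert (m11 M * v1 <= m11 M * (m11 P * v1 + m12 P * v2)) by (apply Rmult_le_compat_l; lra).
  assert (m12 M * v2 <= m12 M * (m21 P * v1 + m22 P * v2)) by (apply Rmult_le_compat_l; lra).
  assert (m21 M * v1 <= m21 M * (m11 P * v1 + m12 P * v2)) by (apply Rmult_le_compat_l; lra).
  assert (m22 M * v2 <= m22 M * (m21 P * v1 + m22 P * v2)) by (apply Rmult_le_compat_l; lra).
  split; nra.
Qed.

Hypothesis Hconv : convergent_to_zero M.

(* v <= M^n v for every n, and M^n -> 0. *)
Lemma convergent_subinvariant_zero v1 v2 : 0 <= v1 -> 0 <= v2 ->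
  v1 <= m11 M * v1 + m12 M * v2 -> v2 <= m21 M * v1 + m22 M * v2 -> v1 <= 0 /\ v2 <= 0.
Proof.
  intros P1 P2 Q1 Q2.
  destruct Hconv as [L11 [L12 [L21 L22]]].
  assert (Ind := M2pow_subinvariant v1 v2 P1 P2 Q1 Q2).
  assert (Lim : forall u1 u2 : nat -> R, is_lim_seq u1 0 -> is_lim_seq u2 0 ->
             is_lim_seq (fun n => u1 n * v1 + u2 n * v2) 0).
  { intros u1 u2 H1 H2.
    assert (A := is_lim_seq_scal_r _ v1 _ H1). assert (B := is_lim_seq_scal_r _ v2 _ H2).
    replace (Rbar_mult 0 v1) with (Finite 0) in A by (simpl; f_equal; ring).
    replace (Rbar_mult 0 v2) with (Finite 0) in B by (simpl; f_equal; ring).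
    assert (C := is_lim_seq_plus' _ _ 0 0 A B). rewrite Rplus_0_r in C. exact C. }
  split.
  - exact (is_lim_seq_le (fun _ => v1) _ v1 0 (fun n => proj1 (Ind n))
             (is_lim_seq_const v1) (Lim _ _ L11 L12)).
  - exact (is_lim_seq_le (fun _ => v2) _ v2 0 (fun n => proj2 (Ind n))
             (is_lim_seq_const v2) (Lim _ _ L21 L22)).
Qed.

Lemma convergent_to_zero_det :
  m11 M < 1 /\ m22 M < 1 /\ 0 < (1 - m11 M) * (1 - m22 M) - m12 M * m21 M.
Proof.
  destruct HM as [N1 [N2 [N3 N4]]].
  assert (h1 : m11 M < 1).
  { destruct (Rlt_or_le (m11 M) 1) as [h|h]; [exact h|].
    destruct (convergent_subinvariant_zero 1 0); lra. }
  assert (h2 : m22 M < 1).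
  { destruct (Rlt_or_le (m22 M) 1) as [h|h]; [exact h|].
    destruct (convergent_subinvariant_zero 0 1); lra. }
  repeat split; try assumption.
  destruct (Rlt_or_le 0 ((1 - m11 M) * (1 - m22 M) - m12 M * m21 M)) as [h3|h3]; [exact h3|].
  destruct (convergent_subinvariant_zero (m12 M) (1 - m11 M)); nra.
Qed.

(* Perron-type weights: the positive vector w = (1 - m22 + m12, 1 - m11 + m21)
   satisfies M w = w - det(I - M) (1, 1), hence M w <= q w for some q < 1. *)
Lemma convergent_to_zero_weights : exists w1 w2 q,
  0 < w1 /\ 0 < w2 /\ 0 <= q < 1 /\
  m11 M * w1 + m12 M * w2 <= q * w1 /\ m21 M * w1 + m22 M * w2 <= q * w2.
Proof.
  destruct HM as [N1 [N2 [N3 N4]]]. destruct convergent_to_zero_det as [h1 [h2 hD]].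
  set (D := (1 - m11 M) * (1 - m22 M) - m12 M * m21 M) in hD.
  set (w1 := 1 - m22 M + m12 M). set (w2 := 1 - m11 M + m21 M).
  assert (P1 : 0 < w1) by (unfold w1; lra). assert (P2 : 0 < w2) by (unfold w2; lra).
  assert (E1 : m11 M * w1 + m12 M * w2 = (1 - D / w1) * w1) by (unfold D, w1, w2; field; lra).
  assert (E2 : m21 M * w1 + m22 M * w2 = (1 - D / w2) * w2) by (unfold D, w1, w2; field; lra).
  assert (G1 : 0 <= 1 - D / w1).
  { apply Rmult_le_reg_r with w1; [exact P1|]. rewrite <- E1, Rmult_0_l. nra. }
  assert (0 < D / w1) by (apply Rdiv_lt_0_compat; assumption).
  assert (0 < D / w2) by (apply Rdiv_lt_0_compat; assumption).
  exists w1, w2, (Rmax (1 - D / w1) (1 - D / w2)).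
  repeat split; try assumption.
  - eapply Rle_trans; [exact G1 | apply Rmax_l].
  - apply Rmax_lub_lt; lra.
  - rewrite E1. apply Rmult_le_compat_r; [lra | apply Rmax_l].
  - rewrite E2. apply Rmult_le_compat_r; [lra | apply Rmax_r].
Qed.

End ConvergentMatrix.

Lemma Mtheta_nonneg CA a k T a11 a12 a21 a22 theta :
  0 <= T -> 0 <= CA -> 0 < a -> 0 < k -> 0 <= a11 -> 0 <= a12 -> 0 <= a21 -> 0 <= a22 ->
  0 <= theta -> M2nonneg (Mtheta CA a k T a11 a12 a21 a22 theta).
Proof.
  intros HT HCA Ha Hk H11 H12 H21 H22 Hth.
  assert (Qp := qplus_nonneg theta T T Hth ltac:(lra)).
  assert (Qm := qminus_nonneg theta T T Hth ltac:(lra)).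
  assert (0 < / a) by (apply Rinv_0_lt_compat; exact Ha).
  assert (0 <= k * / a) by nra.
  unfold M2nonneg, Mtheta; simpl. unfold Rdiv. rewrite !Rmult_1_l.
  assert (0 <= (1 + / a) * T * a11) by (apply Rmult_le_pos; nra).
  assert (0 <= k * / a * T * a21) by (apply Rmult_le_pos; nra).
  assert (0 <= (1 + / a) * a12 + k * / a * a22) by nra.
  repeat split; apply Rmult_le_pos; nra.
Qed.

Section WeightedFixedPoint.
Context {X : CompleteNormedModule R_AbsRing}.
Variables (T rmin rmax : R) (rho1 rho2 : R -> R).
Hypotheses (HT : 0 <= T) (Hrmin : 0 < rmin)
  (Hrho : forall t, 0 <= t <= T -> rmin <= rho1 t <= rmax /\ rmin <= rho2 t <= rmax).

Definition cont_pair (z : (R -> X) * (R -> X)) : Prop :=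
  cont_on 0 T (fst z) /\ cont_on 0 T (snd z).

Definition agree (z z' : (R -> X) * (R -> X)) : Prop :=
  forall t, 0 <= t <= T -> fst z t = fst z' t /\ snd z t = snd z' t.

Definition close (lam : R) (z z' : (R -> X) * (R -> X)) : Prop :=
  forall t, 0 <= t <= T -> norm (minus (fst z t) (fst z' t)) <= lam * rho1 t /\
                           norm (minus (snd z t) (snd z' t)) <= lam * rho2 t.

Lemma close_sym lam z z' : close lam z z' -> close lam z' z.
Proof. intros H t Ht. rewrite (norm_minus_sym (fst z' t)), (norm_minus_sym (snd z' t)). auto. Qed.

Lemma close_trans l1 l2 z z' z'' : close l1 z z' -> close l2 z' z'' -> close (l1 + l2) z z''.
Proof.
  intros H1 H2 t Ht. destruct (H1 t Ht), (H2 t Ht).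
  assert (A := norm_minus_triangle (fst z t) (fst z' t) (fst z'' t)).
  assert (B := norm_minus_triangle (snd z t) (snd z' t) (snd z'' t)).
  split; nra.
Qed.

Lemma close_of_cont z z' : cont_pair z -> cont_pair z' -> exists lam, 0 <= lam /\ close lam z z'.
Proof.
  intros [Hx Hy] [Hx' Hy'].
  destruct (cont_on_bounded 0 T _ HT Hx) as [B1 [? HB1]].
  destruct (cont_on_bounded 0 T _ HT Hy) as [B2 [? HB2]].
  destruct (cont_on_bounded 0 T _ HT Hx') as [B3 [? HB3]].
  destruct (cont_on_bounded 0 T _ HT Hy') as [B4 [? HB4]].
  set (B := B1 + B2 + B3 + B4).
  exists (B / rmin). split; [apply Rdiv_le_0_compat; unfold B; lra|].
  assert (HB : B <= B / rmin * rmin) by (right; field; lra).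
  intros t Ht. destruct (Hrho t Ht) as [[? ?] [? ?]].
  assert (0 <= B / rmin) by (apply Rdiv_le_0_compat; unfold B; lra).
  assert (B / rmin * rmin <= B / rmin * rho1 t) by (apply Rmult_le_compat_l; lra).
  assert (B / rmin * rmin <= B / rmin * rho2 t) by (apply Rmult_le_compat_l; lra).
  assert (A1 := norm_minus_le (fst z t) (fst z' t)).
  assert (A2 := norm_minus_le (snd z t) (snd z' t)).
  specialize (HB1 t Ht). specialize (HB2 t Ht). specialize (HB3 t Ht). specialize (HB4 t Ht).
  unfold B in *. split; lra.
Qed.

Lemma close_le_rmax lam z z' t : 0 <= lam -> close lam z z' -> 0 <= t <= T ->
  norm (minus (fst z t) (fst z' t)) <= lam * rmax /\
  norm (minus (snd z t) (snd z' t)) <= lam * rmax.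
Proof.
  intros Hl H Ht. destruct (Hrho t Ht) as [[? ?] [? ?]], (H t Ht). split; nra.
Qed.

Lemma rmax_nonneg : 0 <= rmax.
Proof. destruct (Hrho 0 ltac:(lra)) as [[? ?] _]. lra. Qed.

Lemma agree_of_close_geometric c q z z' : 0 <= c -> 0 <= q < 1 ->
  (forall n, close (c * q ^ n) z z') -> agree z z'.
Proof.
  intros Hc Hq H t Ht.
  assert (Hcn : forall n, 0 <= c * q ^ n) by (intros n; apply Rmult_le_pos; [|apply pow_le]; lra).
  assert (Hr := rmax_nonneg).
  split; apply eq_of_norm_minus_le; intros eps Heps;
    destruct (pow_lt_eps (c * rmax) q eps) as [n Hn]; try assumption; try nra;
    destruct (close_le_rmax _ z z' t (Hcn n) (H n) Ht); nra.
Qed.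

Variables (Phi : (R -> X) * (R -> X) -> (R -> X) * (R -> X)) (q : R).
Hypotheses (Hq : 0 <= q < 1)
  (HPhi_cont : forall z, cont_pair z -> cont_pair (Phi z))
  (HPhi_contr : forall lam z z', cont_pair z -> cont_pair z' -> 0 <= lam ->
     close lam z z' -> close (q * lam) (Phi z) (Phi z')).

Lemma weighted_fixed_point_unique z z' : cont_pair z -> cont_pair z' ->
  agree (Phi z) z -> agree (Phi z') z' -> agree z z'.
Proof.
  intros Hz Hz' Fz Fz'.
  destruct (close_of_cont z z' Hz Hz') as [lam [Hl H]].
  apply (agree_of_close_geometric lam q); try assumption.
  intros n. induction n as [|n IH]; simpl; [rewrite Rmult_1_r; exact H|].
  intros t Ht. destruct (Fz t Ht) as [<- <-]. destruct (Fz' t Ht) as [<- <-].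
  replace (lam * (q * q ^ n)) with (q * (lam * q ^ n)) by ring.
  apply HPhi_contr; try assumption. apply Rmult_le_pos; [exact Hl | apply pow_le; lra].
Qed.

Definition iterate (n : nat) : (R -> X) * (R -> X) :=
  Nat.iter n Phi (fun _ => zero, fun _ => zero).

Lemma iterate_cont n : cont_pair (iterate n).
Proof.
  induction n as [|n IH]; [split; exact (cont_on_const 0 T zero) | apply HPhi_cont, IH].
Qed.

Lemma iterate_close : exists lam, 0 <= lam /\
  forall n, close (lam * q ^ n) (iterate (S n)) (iterate n).
Proof.
  destruct (close_of_cont _ _ (iterate_cont 1) (iterate_cont 0)) as [lam [Hl H]].
  exists lam. split; [exact Hl|].
  induction n as [|n IH]; [simpl; rewrite Rmult_1_r; exact H|].
  replace (lam * q ^ S n) with (q * (lam * q ^ n)) by (simpl; ring).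
  apply HPhi_contr; [exact (iterate_cont (S n)) | exact (iterate_cont n) | | exact IH].
  apply Rmult_le_pos; [exact Hl | apply pow_le; lra].
Qed.

Section Limit.
Variable lam : R.
Hypotheses (Hlam : 0 <= lam)
  (Hstep : forall n, close (lam * q ^ n) (iterate (S n)) (iterate n)).

Definition iterate_limit : (R -> X) * (R -> X) :=
  (fun t => limseq (fun n => fst (iterate n) t), fun t => limseq (fun n => snd (iterate n) t)).

Lemma iterate_close_limit n : close (lam / (1 - q) * q ^ n) (iterate n) iterate_limit.
Proof.
  intros t Ht. destruct (Hrho t Ht) as [[? ?] [? ?]].
  split.
  - eapply Rle_trans;
      [apply (geometric_limseq (fun m => fst (iterate m) t) (lam * rho1 t) q); try assumption|].
    + apply Rmult_le_pos; lra.
    + intros m. destruct (Hstep m t Ht) as [A _]. eapply Rle_trans; [exact A | right; ring].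
    + right. field. lra.
  - eapply Rle_trans;
      [apply (geometric_limseq (fun m => snd (iterate m) t) (lam * rho2 t) q); try assumption|].
    + apply Rmult_le_pos; lra.
    + intros m. destruct (Hstep m t Ht) as [_ A]. eapply Rle_trans; [exact A | right; ring].
    + right. field. lra.
Qed.

Lemma iterate_limit_cont : cont_pair iterate_limit.
Proof.
  assert (Hl : 0 <= lam / (1 - q)) by (apply Rdiv_le_0_compat; lra).
  assert (Hln : forall n, 0 <= lam / (1 - q) * q ^ n)
    by (intros n; apply Rmult_le_pos; [exact Hl | apply pow_le; lra]).
  assert (Hr := rmax_nonneg).
  assert (Hsmall : forall eps, 0 < eps -> exists n, lam / (1 - q) * rmax * q ^ n < eps)
    by (intros eps Heps; apply pow_lt_eps; [nra | exact Hq | exact Heps]).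
  split.
  - apply (cont_on_uniform_limit 0 T (fun n => fst (iterate n)) _
             (fun n => lam / (1 - q) * rmax * q ^ n));
      [intros n; apply iterate_cont | | exact Hsmall].
    intros n s Hs. destruct (close_le_rmax _ _ _ s (Hln n) (iterate_close_limit n) Hs). nra.
  - apply (cont_on_uniform_limit 0 T (fun n => snd (iterate n)) _
             (fun n => lam / (1 - q) * rmax * q ^ n));
      [intros n; apply iterate_cont | | exact Hsmall].
    intros n s Hs. destruct (close_le_rmax _ _ _ s (Hln n) (iterate_close_limit n) Hs). nra.
Qed.

Lemma iterate_limit_fixed : agree (Phi iterate_limit) iterate_limit.
Proof.
  apply (agree_of_close_geometric (2 * (lam / (1 - q) * q)) q); try assumption.
  { assert (0 <= lam / (1 - q)) by (apply Rdiv_le_0_compat; lra). nra. }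
  intros n.
  replace (2 * (lam / (1 - q) * q) * q ^ n)
    with (q * (lam / (1 - q) * q ^ n) + lam / (1 - q) * q ^ S n) by (simpl; ring).
  apply close_trans with (iterate (S n)).
  - apply close_sym, HPhi_contr.
    + apply iterate_cont.
    + apply iterate_limit_cont.
    + apply Rmult_le_pos; [apply Rdiv_le_0_compat | apply pow_le]; lra.
    + apply iterate_close_limit.
  - apply iterate_close_limit.
Qed.

End Limit.

Lemma weighted_fixed_point : exists z, cont_pair z /\ agree (Phi z) z.
Proof.
  destruct iterate_close as [lam [Hl Hstep]].
  exists (iterate_limit). split.
  - exact (iterate_limit_cont lam Hl Hstep).
  - exact (iterate_limit_fixed lam Hl Hstep).
Qed.

End WeightedFixedPoint.

Section Semigroup.
Context {X : CompleteNormedModule R_AbsRing} (S : R -> X -> X) (T CA : R).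
Hypotheses (HT : 0 < T) (HCA : 0 <= CA)
  (HS0 : forall u, S 0 u = u)
  (HSadd : forall t s u, 0 <= t -> 0 <= s -> S (t + s) u = S t (S s u))
  (HSlin : forall t, 0 <= t -> is_linear (S t))
  (HSb : forall t u, 0 <= t <= 2 * T -> norm (S t u) <= CA * norm u)
  (HSr : forall u, filterlim (fun t => S t u) (at_right 0) (locally u)).

Lemma S_minus t u v : 0 <= t -> S t (minus u v) = minus (S t u) (S t v).
Proof. intros Ht. exact (linear_minus (S t) u v (HSlin t Ht)). Qed.

Lemma S_plus t u v : 0 <= t -> S t (plus u v) = plus (S t u) (S t v).
Proof. intros Ht. exact (linear_plus (S t) (HSlin t Ht) u v). Qed.

Lemma S_scal t (r : R) u : 0 <= t -> S t (scal r u) = scal r (S t u).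
Proof. intros Ht. exact (linear_scal (S t) (HSlin t Ht) r u). Qed.

(* Right continuity at 0 propagates to all of [0, T] through
   S r2 u - S r1 u = S r1 (S (r2 - r1) u - u) and the uniform bound CA. *)
Lemma orbit_cont u : cont_on 0 T (fun r => S r u).
Proof.
  intros r0 Hr0 eps Heps.
  assert (Hnf := @norm_factor_gt_0 _ X).
  assert (He : 0 < eps / ((CA + 1) * (@norm_factor _ X))).
  { apply Rdiv_lt_0_compat; [exact Heps | apply Rmult_lt_0_compat; lra]. }
  destruct (proj1 (filterlim_locally _ _) (HSr u) (mkposreal _ He)) as [d Hd].
  assert (Hright : forall h, 0 < h -> h < d -> norm (minus (S h u) u) < eps / (CA + 1)).
  { intros h H1 H2.
    assert (Hb : ball 0 d h) by (change (Rabs (h - 0) < d); rewrite Rminus_0_r, Rabs_pos_eq; lra).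
    assert (B := @norm_compat2 R_AbsRing X _ _ _ (Hd h Hb H1)). simpl in B.
    replace (norm_factor * (eps / ((CA + 1) * norm_factor))) with (eps / (CA + 1)) in B
      by (field; lra). exact B. }
  assert (Hlt : forall r1 r2, 0 <= r1 -> r1 < r2 -> r2 <= T -> r2 - r1 < d ->
                  norm (minus (S r2 u) (S r1 u)) < eps).
  { intros r1 r2 H1 H2 H3 H4.
    replace r2 with (r1 + (r2 - r1)) by ring. rewrite HSadd, <- S_minus by lra.
    eapply Rle_lt_trans; [apply HSb; lra|].
    apply mult_lt_of_le_div; [exact HCA | exact Heps | apply norm_ge_0 | left; apply Hright; lra]. }
  exists d. split; [apply cond_pos|]. intros r Hr Hrd.
  destruct (Rtotal_order r r0) as [H|[->|H]].
  - rewrite norm_minus_sym. apply Hlt; try lra. rewrite Rabs_left in Hrd; lra.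
  - rewrite norm_minus_self. exact Heps.
  - apply Hlt; try lra. rewrite Rabs_pos_eq in Hrd; lra.
Qed.

Lemma duhamel_integrand_cont g t : 0 <= t <= T -> cont_on 0 T g ->
  cont_on 0 t (fun s => S s (g (t - s))).
Proof.
  intros Ht Hg s0 Hs0 eps Heps.
  assert (He1 : 0 < eps / 2 / (CA + 1)) by (apply Rdiv_lt_0_compat; lra).
  destruct (Hg (t - s0) ltac:(lra) _ He1) as [d1 [Hd1 H1]].
  destruct (orbit_cont (g (t - s0)) s0 ltac:(lra) (eps / 2) ltac:(lra)) as [d2 [Hd2 H2]].
  exists (Rmin d1 d2). split; [apply Rmin_pos; assumption|].
  intros s Hs Hsd.
  assert (Hd1' := Rlt_le_trans _ _ _ Hsd (Rmin_l _ _)).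
  assert (Hd2' := Rlt_le_trans _ _ _ Hsd (Rmin_r _ _)).
  eapply Rle_lt_trans; [apply (norm_minus_triangle _ (S s (g (t - s0))))|].
  rewrite <- S_minus by lra.
  assert (A : CA * norm (minus (g (t - s)) (g (t - s0))) < eps / 2).
  { apply mult_lt_of_le_div; [exact HCA | lra | apply norm_ge_0 | left]. apply H1; [lra|].
    replace (t - s - (t - s0)) with (- (s - s0)) by ring. rewrite Rabs_Ropp. exact Hd1'. }
  assert (B := HSb s (minus (g (t - s)) (g (t - s0))) ltac:(lra)).
  specialize (H2 s ltac:(lra) Hd2'). simpl in H2. lra.
Qed.

(* The integral of S(t - s) g(s), written after the substitution s -> t - s so
   that continuity in t only needs the uniform continuity of g. *)
Definition duhamel (g : R -> X) (t : R) : X := RInt (fun s => S s (g (t - s))) 0 t.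

Lemma is_RInt_duhamel_sub g t a b : 0 <= a <= b -> b <= t -> t <= T -> cont_on 0 T g ->
  is_RInt (fun s => S s (g (t - s))) a b (RInt (fun s => S s (g (t - s))) a b).
Proof.
  intros Hab Hbt HtT Hg. apply RInt_correct, ex_RInt_cont_on; [lra|].
  apply cont_on_subinterval with 0 t; try lra.
  apply duhamel_integrand_cont; [lra | exact Hg].
Qed.

Lemma is_RInt_duhamel g t : 0 <= t <= T -> cont_on 0 T g ->
  is_RInt (fun s => S s (g (t - s))) 0 t (duhamel g t).
Proof. intros Ht Hg. apply is_RInt_duhamel_sub; [lra | lra | lra | exact Hg]. Qed.

Lemma duhamel_0 g : duhamel g 0 = zero.
Proof. apply RInt_point. Qed.

Lemma is_RInt_duhamel_mild g t : 0 <= t <= T -> cont_on 0 T g ->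
  is_RInt (fun s => S (t - s) (g s)) 0 t (duhamel g t).
Proof.
  intros Ht Hg. set (h := fun s => S s (g (t - s))).
  assert (A := is_RInt_swap h t 0 _ (is_RInt_duhamel g t Ht Hg)).
  assert (B : is_RInt h (-1 * 0 + t) (-1 * t + t) (opp (duhamel g t))).
  { replace (-1 * 0 + t) with t by ring. replace (-1 * t + t) with 0 by ring. exact A. }
  assert (C := is_RInt_opp _ 0 t _ (is_RInt_comp_lin h (-1) t 0 t _ B)).
  change (is_RInt (fun y => opp (scal (-1) (h (-1 * y + t)))) 0 t (opp (opp (duhamel g t)))) in C.
  rewrite opp_opp in C. refine (is_RInt_ext _ _ 0 t _ _ C).
  intros s _. unfold h. replace (-1 * s + t) with (t - s) by ring.
  replace (t - (t - s)) with s by ring.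
  rewrite <- scal_opp_one, scal_assoc.
  replace (mult (opp one) (-1)) with (@one R_AbsRing) by (unfold mult, opp, one; simpl; ring).
  apply scal_one.
Qed.

Lemma mild_eq_duhamel (H : X -> X -> X) c1 c2 x y z t :
  0 <= c1 -> 0 <= c2 -> lipschitz2 H c1 c2 -> cont_on 0 T x -> cont_on 0 T y -> 0 <= t <= T ->
  mild_eq S H x y z t -> z t = plus (S t (z 0)) (duhamel (lift2 H x y) t).
Proof.
  intros H1 H2 HH Hx Hy Ht [I [HI ->]]. f_equal.
  apply (is_RInt_unique (V := X) _ 0 t) in HI. rewrite <- HI. apply is_RInt_unique.
  apply is_RInt_duhamel_mild; [exact Ht|]. apply (cont_on_lift2 H c1 c2); assumption.
Qed.

Lemma duhamel_increment g B w t1 t2 : cont_on 0 T g ->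
  (forall s, 0 <= s <= T -> norm (g s) <= B) -> 0 <= t1 <= t2 -> t2 <= T ->
  (forall s, 0 <= s <= t1 -> norm (minus (g (t2 - s)) (g (t1 - s))) <= w) ->
  norm (minus (duhamel g t2) (duhamel g t1)) <= CA * B * (t2 - t1) + CA * w * t1.
Proof.
  intros Hg HB Ht12 Ht2 Hw.
  set (h2 := fun s => S s (g (t2 - s))).
  assert (Ha := is_RInt_duhamel_sub g t2 0 t1 ltac:(lra) ltac:(lra) Ht2 Hg).
  assert (Hb := is_RInt_duhamel_sub g t2 t1 t2 ltac:(lra) ltac:(lra) Ht2 Hg).
  assert (E : duhamel g t2 = plus (RInt h2 0 t1) (RInt h2 t1 t2)).
  { apply (@is_RInt_unique X). exact (is_RInt_Chasles h2 0 t1 t2 _ _ Ha Hb). }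
  rewrite E, (minus_plus_swap (RInt h2 0 t1)).
  eapply Rle_trans; [apply norm_plus_le|].
  assert (I1 := is_RInt_minus _ _ 0 t1 _ _ Ha (is_RInt_duhamel g t1 ltac:(lra) Hg)).
  assert (H1 : norm (minus (RInt h2 0 t1) (duhamel g t1)) <= (t1 - 0) * (CA * w)).
  { refine (norm_RInt_le_const _ 0 t1 _ (CA * w) _ _ I1); [lra|].
    intros s Hs. simpl. rewrite <- S_minus by lra.
    eapply Rle_trans; [apply HSb; lra|]. apply Rmult_le_compat_l; [exact HCA | apply Hw; lra]. }
  assert (H2 : norm (RInt h2 t1 t2) <= (t2 - t1) * (CA * B)).
  { refine (norm_RInt_le_const _ t1 t2 _ (CA * B) _ _ Hb); [lra|].
    intros s Hs. unfold h2.
    eapply Rle_trans; [apply HSb; lra|]. apply Rmult_le_compat_l; [exact HCA | apply HB; lra]. }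
  lra.
Qed.

Lemma duhamel_cont g : cont_on 0 T g -> cont_on 0 T (duhamel g).
Proof.
  intros Hg t Ht eps Heps.
  destruct (cont_on_bounded 0 T g ltac:(lra) Hg) as [B [HB0 HB]].
  assert (0 <= CA * T) by nra. assert (0 <= CA * B) by nra.
  set (w := eps / 2 / (CA * T + 1)). set (d2 := eps / 2 / (CA * B + 1)).
  assert (Hw : 0 < w) by (apply Rdiv_lt_0_compat; lra).
  assert (Hd2 : 0 < d2) by (apply Rdiv_lt_0_compat; lra).
  destruct (cont_on_uniform 0 T g ltac:(lra) Hg w Hw) as [d1 [Hd1 H1]].
  assert (Hgen : forall t1 t2, 0 <= t1 <= t2 -> t2 <= T -> t2 - t1 < Rmin d1 d2 ->
                   norm (minus (duhamel g t2) (duhamel g t1)) < eps).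
  { intros t1 t2 Ht12 Ht2 Hd.
    assert (Hdd1 := Rlt_le_trans _ _ _ Hd (Rmin_l _ _)).
    assert (Hdd2 := Rlt_le_trans _ _ _ Hd (Rmin_r _ _)).
    eapply Rle_lt_trans; [apply (duhamel_increment g B w); try assumption|].
    { intros u Hu. left. apply H1; try lra.
      replace (t2 - u - (t1 - u)) with (t2 - t1) by ring. rewrite Rabs_pos_eq; lra. }
    assert (A1 : (CA * B) * (t2 - t1) < eps / 2)
      by (apply mult_lt_of_le_div; unfold d2 in *; lra).
    assert (A2 : (CA * T) * w < eps / 2) by (apply mult_lt_of_le_div; unfold w in *; lra).
    assert (A3 : CA * w * t1 <= (CA * T) * w) by (assert (0 <= CA * w) by nra; nra).
    lra. }
  exists (Rmin d1 d2). split; [apply Rmin_pos; assumption|].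
  intros s Hs Hsd. destruct (Rle_dec t s).
  - apply Hgen; try lra. rewrite Rabs_pos_eq in Hsd; lra.
  - rewrite norm_minus_sym. apply Hgen; try lra. rewrite Rabs_left in Hsd; lra.
Qed.

(* S tau (S s v) = S (tau + s) v with tau + s <= 2T: this is where the bound
   on [0, 2T] is used. *)
Lemma duhamel_diff_bound f f' al be theta tau t : 0 <= tau <= T -> 0 <= t <= T ->
  cont_on 0 T f -> cont_on 0 T f' ->
  (forall s, 0 <= s <= T -> norm (minus (f s) (f' s)) <= al + be * exp (theta * s)) ->
  norm (S tau (minus (duhamel f t) (duhamel f' t))) <= CA * (t * al + be * qplus theta t).
Proof.
  intros Htau Ht Hf Hf' Hd.
  assert (I0 := is_RInt_minus _ _ 0 t _ _ (is_RInt_duhamel f t Ht Hf) (is_RInt_duhamel f' t Ht Hf')).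
  assert (I1 := is_RInt_linear (S tau) (HSlin tau ltac:(lra)) _ _ _ _ I0).
  assert (Ig : is_RInt (fun s => CA * (al + be * exp (theta * (t - s)))) 0 t
                       (CA * ((t - 0) * al + be * qplus theta t))).
  { apply (@is_RInt_scal R_NormedModule), (@is_RInt_plus R_NormedModule).
    - apply (@is_RInt_const R_NormedModule).
    - apply (@is_RInt_scal R_NormedModule), is_RInt_exp_qplus. }
  rewrite Rminus_0_r in Ig.
  refine (norm_RInt_le _ _ 0 t _ _ ltac:(lra) _ I1 Ig).
  intros s Hs. simpl. rewrite <- S_minus, <- HSadd by lra.
  eapply Rle_trans; [apply HSb; lra|].
  apply Rmult_le_compat_l; [exact HCA|]. apply Hd. lra.
Qed.

Section BoundaryProblem.
Variables (F G : X -> X -> X) (a b k a11 a12 a21 a22 theta : R) (beta : X).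
Hypotheses (Ha : 0 < a) (Hk : 0 < k) (Ha11 : 0 <= a11) (Ha12 : 0 <= a12)
  (Ha21 : 0 <= a21) (Ha22 : 0 <= a22) (Hth : 0 <= theta)
  (HF : lipschitz2 F a11 a12) (HG : lipschitz2 G a21 a22).

(* Solving x(T) - a x(0) = k (y(T) - b beta) for x(0), with x(T) and y(T)
   given by the mild formulas; the x(0) occurring in x(T) is that of the input. *)
Definition initial_value (x y : R -> X) : X :=
  scal (/ a) (minus (plus (S T (x 0)) (duhamel (lift2 F x y) T))
                    (scal k (minus (plus (S T beta) (duhamel (lift2 G x y) T)) (scal b beta)))).

Definition solution_map (z : (R -> X) * (R -> X)) : (R -> X) * (R -> X) :=
  let (x, y) := z in
  (fun t => plus (S t (initial_value x y)) (duhamel (lift2 F x y) t),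
   fun t => plus (S t beta) (duhamel (lift2 G x y) t)).

Lemma solution_map_cont z : cont_pair T z -> cont_pair T (solution_map z).
Proof.
  destruct z as [x y]. intros [Hx Hy]. split; simpl;
    apply cont_on_plus; try apply orbit_cont; apply duhamel_cont;
    [apply (cont_on_lift2 F a11 a12) | apply (cont_on_lift2 G a21 a22)]; assumption.
Qed.

Let M := Mtheta CA a k T a11 a12 a21 a22 theta.

Section Difference.
Variables (x y x' y' : R -> X) (p r : R).
Hypotheses (Hx : cont_on 0 T x) (Hy : cont_on 0 T y) (Hx' : cont_on 0 T x') (Hy' : cont_on 0 T y')
  (Hp : 0 <= p) (Hr : 0 <= r)
  (Hxy : forall t, 0 <= t <= T ->
     norm (minus (x t) (x' t)) <= p /\ norm (minus (y t) (y' t)) <= r * exp (theta * t)).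

Lemma lift2_diff_bound (H : X -> X -> X) c1 c2 :
  lipschitz2 H c1 c2 ->
  0 <= c1 -> 0 <= c2 ->
  forall s, 0 <= s <= T ->
    norm (minus (lift2 H x y s) (lift2 H x' y' s)) <= c1 * p + (c2 * r) * exp (theta * s).
Proof.
  intros HH H1 H2 s Hs. unfold lift2. eapply Rle_trans; [apply HH|].
  destruct (Hxy s Hs) as [A1 A2]. rewrite Rmult_assoc.
  apply Rplus_le_compat; apply Rmult_le_compat_l; assumption.
Qed.

Lemma duhamel_lift2_diff_bound (H : X -> X -> X) c1 c2 tau t :
  lipschitz2 H c1 c2 ->
  0 <= c1 -> 0 <= c2 -> 0 <= tau <= T -> 0 <= t <= T ->
  norm (S tau (minus (duhamel (lift2 H x y) t) (duhamel (lift2 H x' y') t)))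
    <= CA * (T * c1 * p + c2 * r * qplus theta T).
Proof.
  intros HH H1 H2 Htau Ht.
  eapply Rle_trans.
  - apply duhamel_diff_bound; [exact Htau | exact Ht | | |].
    + exact (cont_on_lift2 H c1 c2 0 T x y H1 H2 HH Hx Hy).
    + exact (cont_on_lift2 H c1 c2 0 T x' y' H1 H2 HH Hx' Hy').
    + exact (lift2_diff_bound H c1 c2 HH H1 H2).
  - apply Rmult_le_compat_l; [exact HCA|].
    assert (qplus theta t <= qplus theta T) by (apply qplus_le_mono; lra).
    assert (0 <= qplus theta t) by (apply (qplus_nonneg theta t T); lra).
    assert (0 <= c1 * p) by nra. assert (0 <= c2 * r) by nra. nra.
Qed.

Lemma initial_value_diff_bound t : 0 <= t <= T ->
  norm (S t (minus (initial_value x y) (initial_value x' y'))) <=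
    / a * (CA * p + CA * (T * a11 * p + a12 * r * qplus theta T)
                   + k * (CA * (T * a21 * p + a22 * r * qplus theta T))).
Proof.
  intros Ht.
  assert (Ediff : minus (initial_value x y) (initial_value x' y') =
    scal (/ a) (minus (plus (minus (S T (x 0)) (S T (x' 0)))
                            (minus (duhamel (lift2 F x y) T) (duhamel (lift2 F x' y') T)))
                      (scal k (minus (duhamel (lift2 G x y) T) (duhamel (lift2 G x' y') T))))).
  { unfold initial_value. apply (@minus_scal_combination (CompleteNormedModule.ModuleSpace _ X)). }
  rewrite Ediff, S_scal, S_minus, S_plus, S_scal by lra.
  eapply Rle_trans; [apply norm_scal_le|].
  rewrite Rabs_pos_eq by (apply Rlt_le, Rinv_0_lt_compat; exact Ha).
  apply Rmult_le_compat_l; [apply Rlt_le, Rinv_0_lt_compat; exact Ha|].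
  eapply Rle_trans; [apply norm_minus_le|].
  assert (A1 : norm (S t (minus (S T (x 0)) (S T (x' 0)))) <= CA * p).
  { rewrite <- S_minus, <- HSadd by lra.
    eapply Rle_trans; [apply HSb; lra|]. apply Rmult_le_compat_l; [exact HCA|]. apply Hxy. lra. }
  assert (A2 := duhamel_lift2_diff_bound F a11 a12 t T HF Ha11 Ha12 Ht ltac:(lra)).
  assert (A3 := duhamel_lift2_diff_bound G a21 a22 t T HG Ha21 Ha22 Ht ltac:(lra)).
  assert (A4 := norm_plus_le (S t (minus (S T (x 0)) (S T (x' 0))))
                  (S t (minus (duhamel (lift2 F x y) T) (duhamel (lift2 F x' y') T)))).
  eapply Rle_trans; [apply Rplus_le_compat_l, norm_scal_le|].
  rewrite Rabs_pos_eq by lra. nra.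
Qed.

Lemma solution_map_diff t : 0 <= t <= T ->
  norm (minus (fst (solution_map (x, y)) t) (fst (solution_map (x', y')) t))
    <= m11 M * p + m12 M * r /\
  norm (minus (snd (solution_map (x, y)) t) (snd (solution_map (x', y')) t))
    <= (m21 M * p + m22 M * r) * exp (theta * t).
Proof.
  intros Ht. unfold M, Mtheta. simpl.
  assert (Qle := qplus_le_mono theta t T Hth Ht).
  assert (Qexp := qplus_le_exp_qminus theta t T Hth Ht).
  assert (Q0 := qplus_nonneg theta t T Hth Ht).
  assert (1 <= exp (theta * t)) by (apply exp_ge_1; nra).
  split.
  - rewrite (minus_plus_plus (S t (initial_value x y))), <- S_minus by lra.
    eapply Rle_trans; [apply norm_plus_le|].
    assert (A1 := initial_value_diff_bound t Ht).
    assert (A2 := duhamel_lift2_diff_bound F a11 a12 0 t HF Ha11 Ha12 ltac:(lra) Ht).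
    rewrite HS0 in A2.
    eapply Rle_trans; [apply Rplus_le_compat; [exact A1 | exact A2]|].
    apply Req_le. field. lra.
  - rewrite (minus_plus_l (S t beta)).
    assert (A := duhamel_diff_bound _ _ (a21 * p) (a22 * r) theta 0 t ltac:(lra) Ht
                   (cont_on_lift2 G a21 a22 0 T x y Ha21 Ha22 HG Hx Hy)
                   (cont_on_lift2 G a21 a22 0 T x' y' Ha21 Ha22 HG Hx' Hy')
                   (lift2_diff_bound G a21 a22 HG Ha21 Ha22)).
    rewrite HS0 in A. eapply Rle_trans; [exact A|].
    assert (Qm := qminus_nonneg theta t T Hth Ht).
    assert (t * (a21 * p) <= T * a21 * p * exp (theta * t)).
    { assert (0 <= a21 * p) by nra. assert (0 <= T * a21 * p) by nra. nra. }
    assert (a22 * r * qplus theta t <= a22 * r * (exp (theta * t) * qminus theta T))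
      by (apply Rmult_le_compat_l; nra).
    apply Rle_trans with
      (CA * (T * a21 * p * exp (theta * t) + a22 * r * (exp (theta * t) * qminus theta T))).
    + apply Rmult_le_compat_l; [exact HCA | nra].
    + apply Req_le. ring.
Qed.

End Difference.

Lemma solution_map_fixed_initial x y : agree T (solution_map (x, y)) (x, y) ->
  x 0 = initial_value x y /\ y 0 = beta.
Proof.
  intros Hfix. destruct (Hfix 0 ltac:(lra)) as [Ex Ey]. simpl in Ex, Ey.
  rewrite <- Ex, <- Ey, !HS0, !duhamel_0.
  split; [apply (plus_zero_r (initial_value x y)) | apply (plus_zero_r beta)].
Qed.

Lemma initial_value_boundary x y :
  minus (plus (S T (x 0)) (duhamel (lift2 F x y) T)) (scal a (x 0)) =
    scal k (minus (plus (S T beta) (duhamel (lift2 G x y) T)) (scal b beta)) <->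
  x 0 = initial_value x y.
Proof.
  unfold initial_value. apply (@minus_scal_eq_iff (CompleteNormedModule.ModuleSpace _ X)). lra.
Qed.

Lemma fixed_point_is_solution z : cont_pair T z -> agree T (solution_map z) z ->
  is_solution S F G T a b k beta (fst z) (snd z).
Proof.
  destruct z as [x y]. simpl. intros [Hx Hy] Hfix.
  destruct (solution_map_fixed_initial x y Hfix) as [Hx0 Hy0].
  assert (Hxt : forall t, 0 <= t <= T -> x t = plus (S t (x 0)) (duhamel (lift2 F x y) t)).
  { intros t Ht. rewrite Hx0. symmetry. apply (Hfix t Ht). }
  assert (Hyt : forall t, 0 <= t <= T -> y t = plus (S t (y 0)) (duhamel (lift2 G x y) t)).
  { intros t Ht. rewrite Hy0. symmetry. apply (Hfix t Ht). }
  repeat split; try (apply continuous_on_0T_iff; assumption); try assumption.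
  - exists (duhamel (lift2 F x y) t). split; [|apply Hxt; assumption].
    apply is_RInt_duhamel_mild; [assumption|]. apply (cont_on_lift2 F a11 a12); assumption.
  - exists (duhamel (lift2 G x y) t). split; [|apply Hyt; assumption].
    apply is_RInt_duhamel_mild; [assumption|]. apply (cont_on_lift2 G a21 a22); assumption.
  - rewrite (Hxt T), (Hyt T), Hy0 by lra. apply initial_value_boundary. exact Hx0.
Qed.

Lemma solution_is_fixed_point x y : is_solution S F G T a b k beta x y ->
  cont_pair T (x, y) /\ agree T (solution_map (x, y)) (x, y).
Proof.
  intros [Cx [Cy [Hy0 [Hm Hbd]]]].
  apply continuous_on_0T_iff in Cx, Cy.
  assert (Hxt : forall t, 0 <= t <= T -> x t = plus (S t (x 0)) (duhamel (lift2 F x y) t)).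
  { intros t Ht. apply (mild_eq_duhamel F a11 a12); try assumption. apply Hm, Ht. }
  assert (Hyt : forall t, 0 <= t <= T -> y t = plus (S t (y 0)) (duhamel (lift2 G x y) t)).
  { intros t Ht. apply (mild_eq_duhamel G a21 a22); try assumption. apply Hm, Ht. }
  assert (Hx0 : x 0 = initial_value x y).
  { apply initial_value_boundary. rewrite <- (Hxt T), <- Hy0, <- (Hyt T) by lra. exact Hbd. }
  split; [split; assumption|].
  intros t Ht. simpl. rewrite <- Hx0, <- Hy0. split; symmetry; [apply Hxt | apply Hyt]; exact Ht.
Qed.

Lemma solution_map_contraction w1 w2 q : 0 < w1 -> 0 < w2 ->
  m11 M * w1 + m12 M * w2 <= q * w1 -> m21 M * w1 + m22 M * w2 <= q * w2 ->
  forall lam z z', cont_pair T z -> cont_pair T z' -> 0 <= lam ->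
  close T (fun _ => w1) (fun t => w2 * exp (theta * t)) lam z z' ->
  close T (fun _ => w1) (fun t => w2 * exp (theta * t)) (q * lam)
    (solution_map z) (solution_map z').
Proof.
  intros Hw1 Hw2 Hq1 Hq2 lam [x y] [x' y'] [Hx Hy] [Hx' Hy'] Hl Hclose t Ht.
  destruct (solution_map_diff x y x' y' (lam * w1) (lam * w2) Hx Hy Hx' Hy')
    with (t := t) as [A B]; try assumption; try nra.
  { intros s Hs. destruct (Hclose s Hs) as [C D]. simpl in D.
    rewrite <- Rmult_assoc in D. split; assumption. }
  assert (0 < exp (theta * t)) by apply exp_pos.
  split.
  - eapply Rle_trans; [exact A|]. nra.
  - eapply Rle_trans; [exact B|].
    apply Rle_trans with ((lam * (q * w2)) * exp (theta * t)); [|right; ring].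
    apply Rmult_le_compat_r; nra.
Qed.

Theorem boundary_problem_well_posed :
  convergent_to_zero (Mtheta CA a k T a11 a12 a21 a22 theta) ->
  (exists x y, is_solution S F G T a b k beta x y) /\
  (forall x y x' y', is_solution S F G T a b k beta x y -> is_solution S F G T a b k beta x' y' ->
     forall t, 0 <= t <= T -> x t = x' t /\ y t = y' t).
Proof.
  intros Hconv.
  destruct (convergent_to_zero_weights M) as [w1 [w2 [q [Hw1 [Hw2 [Hq [Hq1 Hq2]]]]]]];
    [apply Mtheta_nonneg; lra | exact Hconv |].
  set (rho2 := fun t => w2 * exp (theta * t)).
  assert (Hrho : forall t, 0 <= t <= T ->
    Rmin w1 w2 <= w1 <= Rmax w1 (rho2 T) /\ Rmin w1 w2 <= rho2 t <= Rmax w1 (rho2 T)).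
  { intros t Ht. unfold rho2.
    assert (1 <= exp (theta * t)) by (apply exp_ge_1; nra).
    assert (exp (theta * t) <= exp (theta * T)) by (apply exp_le_mono; nra).
    assert (Rmin w1 w2 <= w1) by apply Rmin_l. assert (Rmin w1 w2 <= w2) by apply Rmin_r.
    assert (w1 <= Rmax w1 (w2 * exp (theta * T))) by apply Rmax_l.
    assert (w2 * exp (theta * T) <= Rmax w1 (w2 * exp (theta * T))) by apply Rmax_r.
    repeat split; nra. }
  assert (Hmin : 0 < Rmin w1 w2) by (apply Rmin_glb_lt; assumption).
  assert (Hcontr := solution_map_contraction w1 w2 q Hw1 Hw2 Hq1 Hq2).
  split.
  - destruct (weighted_fixed_point T _ _ _ rho2 ltac:(lra) Hmin Hrho solution_map q Hq
                solution_map_cont Hcontr) as [z [Hz Hfix]].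
    exists (fst z), (snd z). apply fixed_point_is_solution; assumption.
  - intros x y x' y' Hs Hs'.
    destruct (solution_is_fixed_point x y Hs) as [Hz Hfix].
    destruct (solution_is_fixed_point x' y' Hs') as [Hz' Hfix'].
    exact (weighted_fixed_point_unique T _ _ _ rho2 ltac:(lra) Hmin Hrho solution_map q Hq Hcontr
             _ _ Hz Hz' Hfix Hfix').
Qed.

End BoundaryProblem.

End Semigroup.

Lemma bounded_linear_op_is_linear {X : CompleteNormedModule R_AbsRing} (L : X -> X) :
  bounded_linear_op L -> is_linear L.
Proof.
  intros [Hplus [Hscal [C HC]]]. apply Build_is_linear.
  - exact Hplus.
  - exact Hscal.
  - exists (Rmax 1 C). split; [apply Rlt_le_trans with 1; [lra | apply Rmax_l]|].
    intros u. eapply Rle_trans; [apply HC|].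
    apply Rmult_le_compat_r; [apply norm_ge_0 | apply Rmax_r].
Qed.

Theorem mainTheorem3 (X : CompleteNormedModule R_AbsRing) (T : R)
  (S : R -> X -> X) (D : X -> Prop) (A : X -> X) (CA a b k : R)
  (F G : X -> X -> X) (a11 a12 a21 a22 : R) :
  0 < T ->
  C0_semigroup S -> is_generator S D A ->
  0 <= CA -> (forall t u, 0 <= t <= 2 * T -> norm (S t u) <= CA * norm u) ->
  0 < a -> 0 < b -> 0 < k ->
  (forall p : X * X, continuous (fun q : X * X => F (fst q) (snd q)) p) ->
  (forall p : X * X, continuous (fun q : X * X => G (fst q) (snd q)) p) ->
  0 <= a11 -> 0 <= a12 -> 0 <= a21 -> 0 <= a22 ->
  (forall x xb y yb : X,
      norm (minus (F x y) (F xb yb)) <= a11 * norm (minus x xb) + a12 * norm (minus y yb)) ->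
  (forall x xb y yb : X,
      norm (minus (G x y) (G xb yb)) <= a21 * norm (minus x xb) + a22 * norm (minus y yb)) ->
  (exists theta : R, 0 <= theta /\
      convergent_to_zero (Mtheta CA a k T a11 a12 a21 a22 theta)) ->
  forall beta : X,
    (exists x y : R -> X, is_solution S F G T a b k beta x y) /\
    (forall x y x' y' : R -> X,
        is_solution S F G T a b k beta x y -> is_solution S F G T a b k beta x' y' ->
        forall t, 0 <= t <= T -> x t = x' t /\ y t = y' t).
Proof.
  intros HT [Hbl [HS0 [HSadd HSr]]] _ HCA HSb Ha _ Hk _ _ Ha11 Ha12 Ha21 Ha22 HF HG
    [theta [Hth Hconv]] beta.
  assert (HSlin : forall t, 0 <= t -> is_linear (S t)).
  { intros t Ht. apply bounded_linear_op_is_linear, Hbl, Ht. }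
  exact (boundary_problem_well_posed S T CA HT HCA HS0 HSadd HSlin HSb HSr F G a b k
           a11 a12 a21 a22 theta beta Ha Hk Ha11 Ha12 Ha21 Ha22 Hth HF HG Hconv).
Qed.
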